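(* In the setting below, for each $n\in\mathbb{N}_0$ and $i,j=1,\dots,N$, $$|x_i(s)-x_j(t)|\le d(t_{2n+2})\quad\forall s,t\in[t_{2n+1},t_{2n+2}].$$
   Context: Setting: $N\ge2$; $\psi:\mathbb{R}^d\times\mathbb{R}^d\to\mathbb{R}$ positive, bounded, continuous, $K:=\|\psi\|_\infty$; $\{t_n\}_{n\in\mathbb{N}_0}$ increasing, nonnegative, $t_0=0$, $t_n\to\infty$; $\alpha(0)=1$, $\alpha=1$ on $(t_{2n},t_{2n+1})$, $\alpha=-1$ on $[t_{2n+1},t_{2n+2}]$; $\{x_i\}$ solves $x_i'(t)=\frac1{N-1}\sum_{j\ne i}\alpha(t)\psi(x_i(t),x_j(t))(x_j(t)-x_i(t))$, $t>0$, $x_i(0)=x_i^0\in\mathbb{R}^d$ (continuous, $C^1$ on each $(t_n,t_{n+1})$). $d(t):=\max_{i,j}|x_i(t)-x_j(t)|$. Standing assumptions: $t_{2n+2}-t_{2n+1}<\frac{\ln 2}{K}$ for all $n$; $\sum_{p\ge0}\ln\frac{e^{K(t_{2p+2}-t_{2p+1})}}{2-e^{K(t_{2p+2}-t_{2p+1})}}<\infty$; $\sum_{p\ge0}\ln\max\{1-e^{-K(t_{2p+1}-t_{2p})},1-\frac{\psi_0}{K}(1-e^{-K(t_{2p+1}-t_{2p})})\}=-\infty$, with $\psi_0=\min_{|y|,|z|\le M^0}\psi(y,z)$, $M^0=e^{K\sum_{p}(t_{2p+2}-t_{2p+1})}\max_i|x_i^0|$. *)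

From HB Require Import structures.
From mathcomp Require Import all_boot all_order all_algebra.
From mathcomp Require Import all_classical all_reals all_analysis.
Set Implicit Arguments. Unset Strict Implicit. Unset Printing Implicit Defensive.
Import Order.TTheory GRing.Theory Num.Theory.
Import numFieldNormedType.Exports.
Local Open Scope classical_set_scope.
Local Open Scope ring_scope.

Definition enorm {R : realType} {d : nat} (v : 'rV[R]_d) : R :=
  Num.sqrt (\sum_(k < d) v ord0 k ^+ 2).

(* K := ||psi||_oo (psi is positive, so this is the sup of its values) *)
Definition psi_sup {R : realType} {d : nat} (psi : 'rV[R]_d -> 'rV[R]_d -> R) : R :=
  sup [set psi y z | y in [set: 'rV[R]_d] & z in [set: 'rV[R]_d]].

(* psi_0 := min_{|y|,|z| <= M} psi(y,z) (attained by compactness/continuity) *)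
Definition psi_min_on {R : realType} {d : nat} (psi : 'rV[R]_d -> 'rV[R]_d -> R) (M : R) : R :=
  inf [set psi y z | y in [set y | enorm y <= M] & z in [set z | enorm z <= M]].

Definition diam {R : realType} {d N : nat} (x : 'I_N -> R -> 'rV[R]_d) (t : R) : R :=
  \big[Num.max/0]_(i < N) \big[Num.max/0]_(j < N) enorm (x i t - x j t).

From HB Require Import structures.
From mathcomp Require Import all_boot all_order all_algebra.
From mathcomp Require Import all_classical all_reals all_analysis.
From mathcomp Require Import ring lra.
Import Order.TTheory GRing.Theory Num.Theory.
Import numFieldNormedType.Exports.
Local Open Scope classical_set_scope.
Local Open Scope ring_scope.

(* While alpha = -1 the agents repel each other: in any direction w, an agent
   attaining max_k <w, x_k> moves away from all others, so this maximum cannot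
   decrease. Hence <w, x_i(s)> <= <w, x_p(b)> for some p, and symmetrically
   (with -w) <w, x_j(t)> >= <w, x_q(b)> for some q. For w = x_i(s) - x_j(t) this
   gives |w|^2 <= <w, x_p(b) - x_q(b)>, hence |w| <= |x_p(b) - x_q(b)| <= d(b).
   The monotonicity of the maximum is proved by tilting it: if max_k f_k + e t
   were largest on [s, b] at some c < b, the maximising f_k would have right
   derivative at most -e < 0 at c. *)

Lemma le_arg_max {disp : Order.disp_t} {T : orderType disp} {I : finType}
  (i0 : I) (F : I -> T) j : (F j <= F [arg max_(i > i0) F i])%O.
Proof. by case: (@arg_maxP _ _ _ i0 xpredT F) => // i _; apply. Qed.

Lemma derive_le0_at_right_max {R : realType} (f : R -> R) c b :
  c < b -> derivable f c 1 -> (forall t, c < t < b -> f t <= f c) -> 'D_1 f c <= 0.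
Proof.
move=> cb df fmax.
rewrite ['D_1 f c]cvg_at_rightE; last exact: df.
apply: limr_le.
  rewrite -(cvg_at_rightE (fun h : R => h^-1 *: ((f \o shift c) _ - f c))) //.
  apply: cvg_trans df; apply: cvg_app.
  move=> A [r r0 Ar]; exists r => // h hr h0; apply: Ar => //.
  exact/lt0r_neq0.
near=> h; apply: mulr_ge0_le0.
  by rewrite invr_ge0; apply: ltW; near: h; exists 1 => /=.
rewrite subr_le0 [_%:A]mulr1 /= addrC; apply: fmax; near: h.
exists (b - c); first by rewrite /= subr_gt0.
move=> h; rewrite /= distrC subr0 => /(le_lt_trans (ler_norm _)) hb h0.
by rewrite ltrDl h0 -ltrBrDl.
Unshelve. all: by end_near. Qed.

Lemma le_at_left_end_of_continuous {R : realType} (f : R -> R) a b m :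
  a < b -> {for a, continuous f} -> (forall s, a < s <= b -> f s <= m) -> f a <= m.
Proof.
move=> ab fa fm; apply: (cvgr_to_le (cvg_at_right_filter fa)).
near=> s; apply: fm; apply/andP; split.
  by near: s; exact: nbhs_right_gt.
by near: s; exact: nbhs_right_le.
Unshelve. all: by end_near. Qed.

Lemma is_derive_tilt {R : realType} {f : R -> R} {c : R} (e : R) :
  derivable f c 1 -> is_derive c 1 (fun t => f t + e * t) ('D_1 f c + e).
Proof.
move=> df; rewrite -[e in _ + e]mulr1.
exact: (is_deriveD (derivableP df) (is_deriveZ e (is_derive_id c 1))).
Qed.

Lemma continuous_bigmax {R : realType} (N : nat) (F : 'I_N -> R -> R) g t :
  {for t, continuous g} -> (forall l, {for t, continuous (F l)}) ->
  {for t, continuous (fun s => \big[Num.max/g s]_(l < N) F l s)}.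
Proof.
move=> cg cF.
have -> : (fun s => \big[Num.max/g s]_(l < N) F l s) = \big[(fun u v => u \max v)/g]_(l < N) F l.
  by apply: funext => s; rewrite (big_morph (fun h : R -> R => h s) (id1 := g s) (op1 := Num.max)).
by apply: (big_ind (fun h : R -> R => {for t, continuous h})) => // u v; apply: continuous_max.
Qed.

Lemma continuous_sum {R : realType} (N : nat) (F : 'I_N -> R -> R) t :
  (forall l, {for t, continuous (F l)}) -> {for t, continuous (fun s => \sum_(l < N) F l s)}.
Proof.
move=> cF; apply: (@cvg_big R _ +%R 0 xpredT) => //; first exact: add_continuous.
by move=> l _; exact: cF.
Qed.

Section MaxPrinciple.
Variables (R : realType) (N : nat) (f : 'I_N -> R -> R) (a b : R).
Hypothesis ab : a < b.
Hypothesis f_cont : forall k t, a <= t <= b -> {for t, continuous (f k)}.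
Hypothesis f_der : forall k t, a < t < b -> derivable (f k) t 1.
Hypothesis f_der_argmax :
  forall k t, a < t < b -> (forall l, f l t <= f k t) -> 0 <= 'D_1 (f k) t.

Let fmax k0 t := \big[Num.max/f k0 t]_(l < N) f l t.

Lemma tilted_fmax_no_right_max k0 e c : 0 < e -> a < c < b ->
  ~ (forall t, c < t < b -> fmax k0 t + e * t <= fmax k0 c + e * c).
Proof.
move=> e_gt0 acb cmax.
pose k := [arg max_(l > k0) f l c]%O.
have k_max l : f l c <= f k c := le_arg_max k0 (f^~ c) l.
have fmax_c : fmax k0 c = f k c.
  by apply/le_anti; rewrite bigmax_le //= le_bigmax.
have tilt_der := is_derive_tilt e (f_der k c acb).
have : 'D_1 (fun t => f k t + e * t) c <= 0.
  apply: (@derive_le0_at_right_max _ _ c b); [by case/andP: acb | exact: ex_derive |].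
  move=> t ctb; rewrite -fmax_c; apply: le_trans (cmax t ctb).
  by rewrite lerD2r le_bigmax.
rewrite derive_val.
have := f_der_argmax k c acb k_max; lra.
Qed.

Lemma le_at_right_end_gt m k0 s0 : (forall l, f l b <= m) -> a < s0 <= b -> f k0 s0 <= m.
Proof.
move=> fb_le /andP[as0 s0b]; rewrite leNgt; apply/negP => m_lt.
set D := f k0 s0 - m.
have D_gt0 : 0 < D by rewrite subr_gt0.
set e := D / (b - s0 + 1).
have e_gt0 : 0 < e by rewrite divr_gt0 // ltr_wpDl // subr_ge0.
have e_small : e * (b - s0) < D.
  have -> : e * (b - s0) = D - e by rewrite /e; field; rewrite gt_eqF // ltr_wpDl // subr_ge0.
  by rewrite ltrBlDr ltrDl.
pose Phi t := fmax k0 t + e * t.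
have Phi_cont : {within `[s0, b], continuous Phi}.
  apply: continuous_in_subspaceT => t; rewrite inE /= in_itv /= => /andP[s0t tb].
  have atb : a <= t <= b by rewrite tb (le_trans (ltW as0) s0t).
  apply: continuousD; first by apply: continuous_bigmax => [|l]; exact: f_cont.
  by apply: continuousM; [exact: cvg_cst | exact: cvg_id].
have [c /[!in_itv]/= /andP[s0c cb] cmax] := EVT_max s0b Phi_cont.
have Phi_s0 : f k0 s0 + e * s0 <= Phi c.
  by apply: le_trans (cmax s0 _); rewrite ?lerD2r ?le_bigmax // in_itv /= lexx s0b.
have Phi_b : Phi b < f k0 s0 + e * s0.
  have : fmax k0 b <= m by rewrite bigmax_le.
  rewrite /Phi; move: e_small; rewrite /D mulrBr; lra.
have cb' : c < b by rewrite lt_neqAle cb andbT; apply: contraTneq Phi_s0 => ->; rewrite -ltNge.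
apply: (@tilted_fmax_no_right_max k0 e c e_gt0).
  by rewrite cb' (lt_le_trans as0 s0c).
by move=> t /andP[ct tb]; apply: cmax; rewrite in_itv /= (ltW tb) (le_trans s0c (ltW ct)).
Qed.

Lemma le_at_right_end m k0 s0 : (forall l, f l b <= m) -> a <= s0 <= b -> f k0 s0 <= m.
Proof.
move=> fb_le /andP[]; rewrite le_eqVlt => /predU1P[<- _|as0 s0b].
  apply: le_at_left_end_of_continuous ab _ _; first by apply: f_cont; rewrite lexx ltW.
  by move=> s; exact: le_at_right_end_gt.
by apply: le_at_right_end_gt; rewrite ?as0.
Qed.

End MaxPrinciple.

Definition vdot {R : realType} {d : nat} (v w : 'rV[R]_d) : R :=
  \sum_(c < d) v ord0 c * w ord0 c.

Section VectorDot.
Context {R : realType} {d : nat}.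
Implicit Types (v w u : 'rV[R]_d).

Lemma vdotBr v w u : vdot v (w - u) = vdot v w - vdot v u.
Proof. by rewrite /vdot -sumrB; apply: eq_bigr => c _; rewrite !mxE mulrBr. Qed.

Lemma vdotZr v w k : vdot v (k *: w) = k * vdot v w.
Proof. by rewrite /vdot mulr_sumr; apply: eq_bigr => c _; rewrite mxE mulrCA. Qed.

Lemma vdotNl v w : vdot (- v) w = - vdot v w.
Proof. by rewrite /vdot -sumrN; apply: eq_bigr => c _; rewrite mxE mulNr. Qed.

Lemma vdot_sumr (I : finType) (P : pred I) v (F : I -> 'rV[R]_d) :
  vdot v (\sum_(i | P i) F i) = \sum_(i | P i) vdot v (F i).
Proof.
rewrite /vdot; under eq_bigr do rewrite summxE mulr_sumr.
exact: exchange_big.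
Qed.

Lemma vdot_amgm v u : 2 * vdot v u <= vdot v v + vdot u u.
Proof.
rewrite -subr_ge0.
have -> : vdot v v + vdot u u - 2 * vdot v u = \sum_(c < d) (v ord0 c - u ord0 c) ^+ 2.
  by rewrite /vdot mulr_sumr -big_split -sumrB; apply: eq_bigr => c _ /=; ring.
by apply: sumr_ge0 => c _; exact: sqr_ge0.
Qed.

Lemma enorm_vdot v : enorm v = Num.sqrt (vdot v v).
Proof. by rewrite /enorm /vdot; under eq_bigr do rewrite expr2. Qed.

Lemma is_derive_vdotr {g : R -> 'rV[R]_d} {t : R} w : derivable g t 1 ->
  is_derive t 1 (fun s => vdot w (g s)) (vdot w ('D_1 g t)).
Proof.
move=> dg.
have -> : (fun s => vdot w (g s)) = \sum_(c < d) (fun s => w ord0 c * g s ord0 c).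
  by rewrite fct_sumE.
rewrite (derive_mx dg) /vdot; apply: is_derive_sum => c; rewrite mxE.
exact/is_deriveZ/derivableP/((derivable_mxP _ _ _).1 dg ord0 c).
Qed.

Lemma continuous_vdotr (g : R -> 'rV[R]_d) w t : {for t, continuous g} ->
  {for t, continuous (fun s => vdot w (g s))}.
Proof.
move=> cg; apply: continuous_sum => c.
apply: continuousM; first exact: cvg_cst.
exact: (continuous_comp cg (@coord_continuous R 1 d ord0 c (g t))).
Qed.

End VectorDot.

Section Repulsion.
Variables (R : realType) (d N : nat) (psi : 'rV[R]_d -> 'rV[R]_d -> R).
Variables (x : 'I_N -> R -> 'rV[R]_d) (a b : R).
Hypothesis psi_ge0 : forall y z, 0 <= psi y z.
Hypothesis ab : a < b.
Hypothesis x_cont : forall k t, a <= t <= b -> {for t, continuous (x k)}.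
Hypothesis x_der : forall k t, a < t < b -> derivable (x k) t 1.
Hypothesis x_ode : forall k t, a < t < b ->
  'D_1 (x k) t = (N%:R - 1)^-1 *:
    \sum_(l < N | l != k) (- psi (x k t) (x l t)) *: (x l t - x k t).

Lemma vdot_le_at_right_end w k u : a <= u <= b ->
  exists p, vdot w (x k u) <= vdot w (x p b).
Proof.
move=> aub; pose p := [arg max_(l > k) vdot w (x l b)]%O.
exists p; apply: (@le_at_right_end R N (fun l t => vdot w (x l t)) a b) => //.
- by move=> l t atb; apply/continuous_vdotr/x_cont.
- by move=> l t atb; have D := is_derive_vdotr w (x_der l t atb); exact: ex_derive.
- move=> l t atb l_max; have D := is_derive_vdotr w (x_der l t atb).
  rewrite derive_val x_ode // vdotZr vdot_sumr; apply: mulr_ge0.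
    by rewrite invr_ge0 subr_ge0 ler1n (leq_ltn_trans (leq0n l) (ltn_ord l)).
  apply: sumr_ge0 => j _; rewrite vdotZr vdotBr mulNr -mulrN opprB.
  by apply: mulr_ge0; rewrite ?subr_ge0.
- exact: le_arg_max.
Qed.

Lemma dist_le_diam_right_end i j s t : a <= s <= b -> a <= t <= b ->
  enorm (x i s - x j t) <= diam x b.
Proof.
move=> asb atb; set v := x i s - x j t.
have [p le_p] := vdot_le_at_right_end v i s asb.
have [q le_q] := vdot_le_at_right_end (- v) j t atb.
rewrite !vdotNl lerN2 in le_q.
set u := x p b - x q b.
have vv_le_vu : vdot v v <= vdot v u by rewrite {1}/v /u !vdotBr lerB.
(* 2 <v, u> <= |v|^2 + |u|^2 stands in for Cauchy-Schwarz here. *)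
have vv_le_uu : vdot v v <= vdot u u by have := vdot_amgm v u; lra.
apply: (@le_trans _ _ (enorm u)).
  rewrite !enorm_vdot ler_sqrt //; apply: sumr_ge0 => c _; rewrite -expr2; exact: sqr_ge0.
rewrite /diam; apply: le_trans (le_bigmax _ _ p).
exact: (le_bigmax _ (fun j => enorm (x p b - x j b)) q).
Qed.

End Repulsion.

Theorem lemma3p5 (R : realType) (d N : nat) (psi : 'rV[R]_d -> 'rV[R]_d -> R)
  (tn : nat -> R) (alpha : R -> R) (x : 'I_N -> R -> 'rV[R]_d) :
  (2 <= N)%N ->
  (* psi positive, bounded, continuous *)
  (forall y z, 0 < psi y z) ->
  (exists M : R, forall y z, psi y z <= M) ->
  continuous (fun p : 'rV[R]_d * 'rV[R]_d => psi p.1 p.2) ->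
  (* switching times *)
  tn 0%N = 0 ->
  (forall n, tn n < tn n.+1) ->
  tn @ \oo --> +oo ->
  (* the sign function alpha *)
  alpha 0 = 1 ->
  (forall n s, tn (2 * n)%N < s < tn (2 * n).+1 -> alpha s = 1) ->
  (forall n s, tn (2 * n).+1 <= s <= tn (2 * n).+2 -> alpha s = -1) ->
  (* x solves the system: continuous on [0,oo), C^1 on each (t_n, t_{n+1}) *)
  (forall i, {within [set t : R | 0 <= t], continuous (x i)}) ->
  (forall i n s, tn n < s < tn n.+1 -> derivable (x i) s 1) ->
  (forall i n, {in `]tn n, tn n.+1[, continuous (derive1 (x i))}) ->
  (forall i n s, tn n < s < tn n.+1 ->
     derive1 (x i) s = (N%:R - 1)^-1 *:
       \sum_(j < N | j != i) ((alpha s * psi (x i s) (x j s)) *: (x j s - x i s))) ->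
  (* standing assumptions *)
  (forall n, tn (2 * n).+2 - tn (2 * n).+1 < ln 2 / psi_sup psi) ->
  cvgn (series (fun p => ln (expR (psi_sup psi * (tn (2 * p).+2 - tn (2 * p).+1)) /
                         (2 - expR (psi_sup psi * (tn (2 * p).+2 - tn (2 * p).+1)))))) ->
  (let K := psi_sup psi in
   let M0 := expR (K * limn (series (fun p => tn (2 * p).+2 - tn (2 * p).+1))) *
             \big[Num.max/0]_(i < N) enorm (x i 0) in
   let psi0 := psi_min_on psi M0 in
   series (fun p => ln (Num.max (1 - expR (- K * (tn (2 * p).+1 - tn (2 * p))))
                          (1 - psi0 / K * (1 - expR (- K * (tn (2 * p).+1 - tn (2 * p)))))))
     @ \oo --> -oo) ->
  forall (n : nat) (i j : 'I_N) (s t : R),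
    tn (2 * n).+1 <= s <= tn (2 * n).+2 ->
    tn (2 * n).+1 <= t <= tn (2 * n).+2 ->
    enorm (x i s - x j t) <= diam x (tn (2 * n).+2).
Proof.
move=> _ psi_gt0 _ _ tn0 tn_lt _ _ _ alpha_neg x_cont x_der _ x_ode _ _ _ n i j s t.
have tn_ge0 k : 0 <= tn k.
  by elim: k => [|k IH]; [rewrite tn0 | exact: le_trans IH (ltW (tn_lt k))].
have a_gt0 : 0 < tn (2 * n).+1 := le_lt_trans (tn_ge0 _) (tn_lt _).
apply: (@dist_le_diam_right_end R d N psi).
- by move=> y z; exact: ltW.
- exact: tn_lt.
- move=> k u /andP[au _]; have u_gt0 : 0 < u := lt_le_trans a_gt0 au.
  move: (x_cont k); rewrite -set_itvcy => /continuous_within_itvcyP[+ _].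
  by apply; rewrite in_itv /= andbT.
- by move=> k u; exact: x_der.
- move=> k u aub; have alpha_u : alpha u = -1.
    by apply: (alpha_neg n); case/andP: aub => /ltW -> /ltW ->.
  by rewrite -derive1E (x_ode k _ u aub); under eq_bigr do rewrite alpha_u mulN1r.
Qed.
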